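(* Identify $\mathbb{R}^2$ with $\mathbb{C}$, let $\tau=\frac{1+\sqrt5}{2}$, $\xi=e^{i\pi/5}$, $\alpha_1=1$, $\alpha_2=e^{4\pi i/5}$, $\alpha_H=\tau(\alpha_1+\alpha_2)$. Let $r_1,r_2:\mathbb{C}\to\mathbb{C}$ be $r_j(v)=v-2\,\mathrm{Re}(v\overline{\alpha_j})\,\alpha_j$ (reflection in the line through $0$ orthogonal to $\alpha_j$), and $T(v)=v+\alpha_H$. For $n\in\mathbb{N}_0$ let $Q_2(n)$ be the set of all points $w(0)$, where $w$ ranges over all finite compositions of the maps $T,r_1,r_2$ (including the empty composition) in which $T$ occurs at most $n$ times. Then $$Q_2(n)=\Big\{\sum_{j=0}^9 n_j\xi^j \;\Big|\; n_j\in\mathbb{N}_0,\ \sum_{j=0}^9 n_j=l\le n\Big\}.$$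
   Context: $\mathbb{N}_0$ denotes the nonnegative integers. Note $\alpha_H=e^{2\pi i/5}$ has length $1$, and $\{\xi^j: 0\le j\le 9\}$ is the root system of the Coxeter group $H_2$ (dihedral group of order 10) generated by $r_1,r_2$. *)

From Stdlib Require Import Reals List.
From Coquelicot Require Import Coquelicot.
Open Scope R_scope.

Definition cexpi (theta : R) : C := (cos theta, sin theta).

Definition tau : R := (1 + sqrt 5) / 2.
Definition xi : C := cexpi (PI / 5).
Definition alpha1 : C := RtoC 1.
Definition alpha2 : C := cexpi (4 * PI / 5).
Definition alphaH : C := Cmult (RtoC tau) (Cplus alpha1 alpha2).

Definition refl (a v : C) : C :=
  Cminus v (Cmult (RtoC (2 * Re (Cmult v (Cconj a)))) a).
Definition r1 (v : C) : C := refl alpha1 v.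
Definition r2 (v : C) : C := refl alpha2 v.
Definition Tr (v : C) : C := Cplus v alphaH.

Inductive gen := GT | GR1 | GR2.
Definition gen_map (g : gen) : C -> C :=
  match g with GT => Tr | GR1 => r1 | GR2 => r2 end.

Definition word_map (w : list gen) : C -> C :=
  fold_right (fun g f => fun v => gen_map g (f v)) (fun v => v) w.

Definition countT (w : list gen) : nat :=
  length (filter (fun g => match g with GT => true | _ => false end) w).

Definition Q2 (n : nat) (z : C) : Prop :=
  exists w : list gen, (countT w <= n)%nat /\ word_map w (RtoC 0) = z.

Definition lattice_sum (c : nat -> nat) : C :=
  fold_right Cplus (RtoC 0)
    (map (fun j => Cmult (RtoC (INR (c j))) (Cpow xi j)) (seq 0 10)).

Definition coeff_total (c : nat -> nat) : nat :=
  fold_right Nat.add 0%nat (map c (seq 0 10)).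

(* With xi = e^{i PI/5}, both alpha_1 = xi^0 and alpha_2 = xi^4 are tenth roots of unity,
   and cos(PI/5) = tau/2 gives alpha_H = xi^2.  On a power xi^k the reflections act by
   r_1 : k |-> 5 - k and r_2 : k |-> 13 - k, and they are additive, so the image of 0 under a
   word is a sum of as many powers of xi as the word contains T's.  Conversely r_1 r_2 rotates
   by xi^2 and r_1 xi^2 = xi^3, so some T-free word g maps xi^2 to any given xi^j; then
   g T g^-1 is the translation by xi^j, and any sum of l powers of xi is reached with l T's. *)

From Stdlib Require Import Reals List Lra Lia ZArith Psatz.
From Coquelicot Require Import Coquelicot.
Import ListNotations.
Open Scope R_scope.

Lemma C_ext (x y : C) : fst x = fst y -> snd x = snd y -> x = y.
Proof. destruct x, y; simpl; intros -> ->; reflexivity. Qed.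

Lemma refl_add (a u v : C) : refl a (Cplus u v) = Cplus (refl a u) (refl a v).
Proof. unfold refl; apply C_ext; simpl; ring. Qed.

Lemma refl_0 (a : C) : refl a (RtoC 0) = RtoC 0.
Proof. unfold refl; apply C_ext; simpl; ring. Qed.

Lemma refl_unit (a v : C) :
  Cmult a (Cconj a) = RtoC 1 -> refl a v = Copp (Cmult (Cconj v) (Cmult a a)).
Proof.
  destruct a as [a1 a2], v as [v1 v2]; intros Ha.
  assert (Hn : a1 * a1 + a2 * a2 = 1) by (apply (f_equal fst) in Ha; simpl in Ha; lra).
  unfold refl; apply C_ext; simpl.
  - transitivity (v1 * (a1 * a1 + a2 * a2) - 2 * (v1 * a1 + - (v2 * - a2)) * a1);
      [rewrite Hn | ]; ring.
  - transitivity (v2 * (a1 * a1 + a2 * a2) - 2 * (v1 * a1 + - (v2 * - a2)) * a2);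
      [rewrite Hn | ]; ring.
Qed.

Lemma refl_involutive (a v : C) :
  Cmult a (Cconj a) = RtoC 1 -> refl a (refl a v) = v.
Proof.
  intros Ha; rewrite !refl_unit by exact Ha.
  rewrite Copp_conj, !Cmult_conj, Cconj_conj.
  transitivity (Cmult v (Cmult (Cmult a (Cconj a)) (Cmult a (Cconj a)))); [ring |].
  rewrite Ha; ring.
Qed.

Lemma cexpi_add (s t : R) : Cmult (cexpi s) (cexpi t) = cexpi (s + t).
Proof. unfold cexpi; apply C_ext; simpl; rewrite ?cos_plus, ?sin_plus; ring. Qed.

Lemma cexpi_conj (t : R) : Cconj (cexpi t) = cexpi (- t).
Proof. unfold cexpi, Cconj; simpl; rewrite cos_neg, sin_neg; reflexivity. Qed.

Lemma cexpi_mul_conj (t : R) : Cmult (cexpi t) (Cconj (cexpi t)) = RtoC 1.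
Proof.
  pose proof (sin2_cos2 t) as H; unfold Rsqr in H.
  unfold cexpi; apply C_ext; simpl; lra.
Qed.

Definition xiZ (k : Z) : C := cexpi (IZR k * PI / 5).

Lemma xiZ_add (a b : Z) : Cmult (xiZ a) (xiZ b) = xiZ (a + b).
Proof. unfold xiZ; rewrite cexpi_add, plus_IZR; f_equal; field. Qed.

Lemma xiZ_conj (a : Z) : Cconj (xiZ a) = xiZ (- a).
Proof. unfold xiZ; rewrite cexpi_conj, opp_IZR; f_equal; field. Qed.

Lemma xiZ_mul_conj (a : Z) : Cmult (xiZ a) (Cconj (xiZ a)) = RtoC 1.
Proof. apply cexpi_mul_conj. Qed.

Lemma xiZ_0 : xiZ 0 = RtoC 1.
Proof.
  unfold xiZ, cexpi; replace (IZR 0 * PI / 5) with 0 by field.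
  rewrite cos_0, sin_0; reflexivity.
Qed.

Lemma xiZ_5 : xiZ 5 = RtoC (-1).
Proof.
  unfold xiZ, cexpi; replace (IZR 5 * PI / 5) with PI by field.
  rewrite cos_PI, sin_PI; reflexivity.
Qed.

Lemma xiZ_add_10 (a : Z) : xiZ (a + 10) = xiZ a.
Proof.
  replace (a + 10)%Z with (a + (5 + 5))%Z by lia.
  rewrite <- !xiZ_add, xiZ_5; apply C_ext; simpl; ring.
Qed.

Lemma xiZ_period (a q : Z) : xiZ (a + 10 * q) = xiZ a.
Proof.
  induction q as [| q IH | q IH] using Z.peano_ind.
  - rewrite Z.add_0_r; reflexivity.
  - rewrite <- IH, <- (xiZ_add_10 (a + 10 * q)); f_equal; lia.
  - rewrite <- IH, <- (xiZ_add_10 (a + 10 * Z.pred q)); f_equal; lia.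
Qed.

Lemma xiZ_mod (a : Z) : xiZ (a mod 10) = xiZ a.
Proof.
  rewrite <- (xiZ_period (a mod 10) (a / 10)); f_equal.
  pose proof (Z.div_mod a 10 ltac:(lia)); lia.
Qed.

Lemma xi_pow (j : nat) : Cpow xi j = xiZ (Z.of_nat j).
Proof.
  induction j as [| j IH]; simpl Cpow.
  - symmetry; apply xiZ_0.
  - rewrite IH; replace xi with (xiZ 1) by (unfold xiZ, xi; f_equal; field).
    rewrite xiZ_add, Nat2Z.inj_succ, Z.add_1_l; reflexivity.
Qed.

Lemma refl_xiZ (a k : Z) : refl (xiZ a) (xiZ k) = xiZ (2 * a - k + 5).
Proof.
  rewrite refl_unit by apply xiZ_mul_conj.
  rewrite xiZ_conj, !xiZ_add.
  replace (2 * a - k + 5)%Z with (- k + (a + a) + 5)%Z by lia.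
  rewrite <- (xiZ_add _ 5), xiZ_5; apply C_ext; simpl; ring.
Qed.

Lemma alpha1_xiZ : alpha1 = xiZ 0.
Proof. rewrite xiZ_0; reflexivity. Qed.

Lemma alpha2_xiZ : alpha2 = xiZ 4.
Proof. reflexivity. Qed.

Lemma r1_xiZ (k : Z) : r1 (xiZ k) = xiZ (5 - k).
Proof. unfold r1; rewrite alpha1_xiZ, refl_xiZ; f_equal; lia. Qed.

Lemma r2_xiZ (k : Z) : r2 (xiZ k) = xiZ (13 - k).
Proof. unfold r2; rewrite alpha2_xiZ, refl_xiZ; f_equal; lia. Qed.

Lemma r1_involutive (v : C) : r1 (r1 v) = v.
Proof. unfold r1; rewrite alpha1_xiZ; apply refl_involutive, xiZ_mul_conj. Qed.

Lemma r2_involutive (v : C) : r2 (r2 v) = v.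
Proof. unfold r2; rewrite alpha2_xiZ; apply refl_involutive, xiZ_mul_conj. Qed.

Lemma tau_sq : tau * tau = tau + 1.
Proof.
  pose proof (sqrt_sqrt 5 ltac:(lra)) as H5.
  unfold tau; nra.
Qed.

(* cos(3x) = -cos(2x) at x = PI/5 makes c = cos(PI/5) a root of (c + 1)(4c^2 - 2c - 1). *)
Lemma cos_PI5 : cos (PI / 5) = tau / 2.
Proof.
  set (c := cos (PI / 5)); set (s := sin (PI / 5)).
  assert (Hsc : s * s + c * c = 1) by (pose proof (sin2_cos2 (PI / 5)) as H;
    fold s c in H; unfold Rsqr in H; lra).
  assert (H3 : cos (2 * (PI / 5) + PI / 5) = - cos (2 * (PI / 5))).
  { replace (2 * (PI / 5) + PI / 5) with (PI - 2 * (PI / 5)) by field.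
    apply Rtrigo_facts.cos_pi_minus. }
  rewrite cos_plus, sin_2a, cos_2a in H3; fold c s in H3.
  assert (Hc : 0 < c) by (apply cos_gt_0; pose proof PI_RGT_0; lra).
  assert (Hroot : (c + 1) * (4 * c * c - 2 * c - 1) = 0) by nra.
  apply Rmult_integral in Hroot as [Hroot | Hroot]; [lra |].
  assert (Hq : (4 * c - 1) * (4 * c - 1) = 5) by nra.
  assert (Hpos : 0 <= 4 * c - 1) by nra.
  unfold tau; rewrite <- Hq, sqrt_square by exact Hpos; lra.
Qed.

Lemma cos_2PI5 : cos (2 * (PI / 5)) = (tau - 1) / 2.
Proof. rewrite cos_2a_cos, cos_PI5; pose proof tau_sq; lra. Qed.

(* alpha_H = tau (1 + xi^4) = xi^2 * tau (xi^-2 + xi^2) = xi^2 * 2 tau cos(2 PI/5),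
   and 2 tau cos(2 PI/5) = tau^2 - tau = 1. *)
Lemma alphaH_xiZ : alphaH = xiZ 2.
Proof.
  assert (Hsum : Cplus (xiZ (-2)) (xiZ 2) = RtoC (2 * cos (2 * (PI / 5)))).
  { unfold xiZ, cexpi; apply C_ext; simpl.
    - replace (-2 * PI / 5) with (- (2 * (PI / 5))) by field.
      replace (2 * PI / 5) with (2 * (PI / 5)) by field.
      rewrite cos_neg; ring.
    - replace (-2 * PI / 5) with (- (2 * PI / 5)) by field.
      rewrite sin_neg; ring. }
  assert (Hunit : Cplus alpha1 alpha2 = Cmult (xiZ 2) (Cplus (xiZ (-2)) (xiZ 2))).
  { rewrite alpha1_xiZ, alpha2_xiZ, Cmult_plus_distr_l, !xiZ_add; reflexivity. }
  unfold alphaH; rewrite Hunit, Hsum, cos_2PI5.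
  replace (RtoC (2 * ((tau - 1) / 2))) with (RtoC (tau - 1)) by (f_equal; field).
  transitivity (Cmult (RtoC (tau * (tau - 1))) (xiZ 2)).
  - rewrite RtoC_mult; ring.
  - replace (tau * (tau - 1)) with 1 by (pose proof tau_sq; lra); ring.
Qed.

Definition xi_sum (L : list Z) : C :=
  fold_right (fun a s => Cplus (xiZ a) s) (RtoC 0) L.

Lemma xi_sum_app (L M : list Z) : xi_sum (L ++ M) = Cplus (xi_sum L) (xi_sum M).
Proof. induction L as [| a L IH]; simpl; [| rewrite IH]; ring. Qed.

Lemma xi_sum_repeat (a : Z) (m : nat) : xi_sum (repeat a m) = Cmult (RtoC (INR m)) (xiZ a).
Proof.
  induction m as [| m IH]; simpl repeat; simpl xi_sum; [simpl INR | rewrite IH, S_INR, RtoC_plus]; ring.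
Qed.

Lemma refl_xi_sum (a : C) (f : Z -> Z) (L : list Z) :
  (forall k, refl a (xiZ k) = xiZ (f k)) -> refl a (xi_sum L) = xi_sum (map f L).
Proof.
  intros Hf; induction L as [| k L IH]; simpl.
  - apply refl_0.
  - rewrite refl_add, Hf, IH; reflexivity.
Qed.

Lemma word_map_app (w w' : list gen) (v : C) : word_map (w ++ w') v = word_map w (word_map w' v).
Proof. induction w as [| g w IH]; simpl; [| rewrite IH]; reflexivity. Qed.

Lemma countT_app (w w' : list gen) : countT (w ++ w') = (countT w + countT w')%nat.
Proof. unfold countT; rewrite filter_app, length_app; reflexivity. Qed.

Lemma countT_rev (w : list gen) : countT (rev w) = countT w.
Proof.
  induction w as [| x w IH]; [reflexivity |].
  simpl rev; rewrite countT_app, IH; destruct x; unfold countT; simpl; lia.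
Qed.

Lemma word_map_xi_sum (w : list gen) :
  exists L, length L = countT w /\ word_map w (RtoC 0) = xi_sum L.
Proof.
  induction w as [| g w [L [HL Hw]]].
  - exists []; split; reflexivity.
  - change (word_map (g :: w) (RtoC 0)) with (gen_map g (word_map w (RtoC 0))).
    rewrite Hw; destruct g; simpl gen_map.
    + exists (2%Z :: L); split; [simpl; rewrite HL; reflexivity |].
      unfold Tr; rewrite alphaH_xiZ; simpl; ring.
    + exists (map (fun k => 5 - k)%Z L); split; [rewrite length_map; exact HL |].
      apply refl_xi_sum, r1_xiZ.
    + exists (map (fun k => 13 - k)%Z L); split; [rewrite length_map; exact HL |].
      apply refl_xi_sum, r2_xiZ.
Qed.

Section ReflectionWords.

Variable g : list gen.
Hypothesis g_T_free : countT g = 0%nat.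

Lemma word_map_add_T_free (u v : C) :
  word_map g (Cplus u v) = Cplus (word_map g u) (word_map g v).
Proof.
  induction g as [| x w IH]; [reflexivity |].
  destruct x; [discriminate | |]; simpl; rewrite IH by exact g_T_free; apply refl_add.
Qed.

Lemma word_map_rev_T_free (v : C) : word_map g (word_map (rev g) v) = v.
Proof.
  revert v; induction g as [| x w IH]; intros v; [reflexivity |].
  simpl rev; rewrite word_map_app.
  destruct x; [discriminate | |]; simpl; rewrite IH by exact g_T_free;
    [apply r1_involutive | apply r2_involutive].
Qed.

Lemma countT_conj_T : countT (g ++ GT :: rev g) = 1%nat.
Proof.
  rewrite countT_app; change (countT (GT :: rev g)) with (S (countT (rev g))).
  rewrite countT_rev, g_T_free; reflexivity.
Qed.

Lemma word_map_conj_T (v : C) :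
  word_map (g ++ GT :: rev g) v = Cplus v (word_map g alphaH).
Proof.
  rewrite word_map_app; simpl word_map at 2; unfold Tr.
  rewrite word_map_add_T_free, word_map_rev_T_free; reflexivity.
Qed.

End ReflectionWords.

Fixpoint rotation_word (m : nat) : list gen :=
  match m with
  | O => []
  | S m => GR1 :: GR2 :: rotation_word m
  end.

Lemma countT_rotation_word (m : nat) : countT (rotation_word m) = 0%nat.
Proof. induction m as [| m IH]; [reflexivity | exact IH]. Qed.

Lemma rotation_word_xiZ (m : nat) (a : Z) :
  word_map (rotation_word m) (xiZ a) = xiZ (a + 2 * Z.of_nat m).
Proof.
  induction m as [| m IH]; [simpl; f_equal; lia |].
  change (word_map (rotation_word (S m)) (xiZ a))
    with (r1 (r2 (word_map (rotation_word m) (xiZ a)))).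
  rewrite IH, r2_xiZ, r1_xiZ, <- (xiZ_period _ 1); f_equal; lia.
Qed.

Lemma xiZ_orbit (a : Z) : exists g, countT g = 0%nat /\ word_map g (xiZ 2) = xiZ a.
Proof.
  rewrite <- (xiZ_mod a); pose proof (Z.mod_pos_bound a 10 ltac:(lia)).
  destruct (Nat.Even_or_Odd (Z.to_nat (a mod 10))) as [[j Hj] | [j Hj]].
  - exists (rotation_word (j + 4)); split; [apply countT_rotation_word |].
    rewrite rotation_word_xiZ, <- (xiZ_period (a mod 10) 1); f_equal; lia.
  - exists (rotation_word (j + 4) ++ [GR1]); split.
    + rewrite countT_app, countT_rotation_word; reflexivity.
    + rewrite word_map_app; simpl word_map at 2; rewrite r1_xiZ, rotation_word_xiZ.
      rewrite <- (xiZ_period (a mod 10) 1); f_equal; lia.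
Qed.

Lemma xi_sum_word (L : list Z) :
  exists w, countT w = length L /\ word_map w (RtoC 0) = xi_sum L.
Proof.
  induction L as [| a L [w [Hc Hw]]].
  - exists []; split; reflexivity.
  - destruct (xiZ_orbit a) as [g [Hg Hga]].
    exists ((g ++ GT :: rev g) ++ w); split.
    + rewrite countT_app, countT_conj_T, Hc by exact Hg; reflexivity.
    + rewrite word_map_app, word_map_conj_T, alphaH_xiZ, Hga, Hw by exact Hg.
      simpl; ring.
Qed.

Lemma Q2_iff_xi_sum (n : nat) (z : C) :
  Q2 n z <-> exists L, (length L <= n)%nat /\ z = xi_sum L.
Proof.
  split.
  - intros [w [Hn <-]]; destruct (word_map_xi_sum w) as [L [HL Hw]].
    exists L; split; [lia | exact Hw].
  - intros [L [Hn ->]]; destruct (xi_sum_word L) as [w [Hc Hw]].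
    exists w; split; [lia | exact Hw].
Qed.

Definition list_of_coeffs (c : nat -> nat) : list Z :=
  flat_map (fun j => repeat (Z.of_nat j) (c j)) (seq 0 10).

Lemma length_list_of_coeffs (c : nat -> nat) : length (list_of_coeffs c) = coeff_total c.
Proof.
  unfold list_of_coeffs, coeff_total; cbn [seq flat_map map fold_right].
  rewrite !length_app, !repeat_length; simpl; lia.
Qed.

Lemma xi_sum_list_of_coeffs (c : nat -> nat) : xi_sum (list_of_coeffs c) = lattice_sum c.
Proof.
  unfold list_of_coeffs, lattice_sum; cbn [seq flat_map map fold_right].
  rewrite !xi_sum_app, !xi_sum_repeat, !xi_pow; simpl; ring.
Qed.

Lemma lattice_sum_add (c d : nat -> nat) :
  lattice_sum (fun j => (c j + d j)%nat) = Cplus (lattice_sum c) (lattice_sum d).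
Proof. unfold lattice_sum; cbn [seq map fold_right]; rewrite !plus_INR, !RtoC_plus; ring. Qed.

Lemma coeff_total_add (c d : nat -> nat) :
  coeff_total (fun j => (c j + d j)%nat) = (coeff_total c + coeff_total d)%nat.
Proof. unfold coeff_total; cbn [seq map fold_right]; lia. Qed.

Definition unit_coeff (k j : nat) : nat := if Nat.eqb j k then 1%nat else 0%nat.

Lemma unit_coeff_spec (k : nat) : (k < 10)%nat ->
  coeff_total (unit_coeff k) = 1%nat /\ lattice_sum (unit_coeff k) = Cpow xi k.
Proof.
  intros Hk; unfold lattice_sum, coeff_total, unit_coeff.
  do 10 (destruct k as [| k];
    [cbn [seq map fold_right Nat.eqb INR Nat.add]; split; [reflexivity | ring] |]).
  lia.
Qed.

Lemma xi_sum_coeffs (L : list Z) :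
  exists c, coeff_total c = length L /\ lattice_sum c = xi_sum L.
Proof.
  induction L as [| a L [c [Hc Hs]]].
  - exists (fun _ => 0%nat); split; [reflexivity |].
    unfold lattice_sum; cbn [seq map fold_right INR]; simpl; ring.
  - pose proof (Z.mod_pos_bound a 10 ltac:(lia)).
    destruct (unit_coeff_spec (Z.to_nat (a mod 10)) ltac:(lia)) as [H1 Ha].
    exists (fun j => (unit_coeff (Z.to_nat (a mod 10)) j + c j)%nat).
    rewrite coeff_total_add, lattice_sum_add, H1, Hc, Ha, Hs, xi_pow, Z2Nat.id, xiZ_mod by lia.
    split; reflexivity.
Qed.

Lemma lattice_iff_xi_sum (n : nat) (z : C) :
  (exists c, (coeff_total c <= n)%nat /\ z = lattice_sum c) <->
  exists L, (length L <= n)%nat /\ z = xi_sum L.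
Proof.
  split.
  - intros [c [Hn ->]]; exists (list_of_coeffs c).
    rewrite length_list_of_coeffs, xi_sum_list_of_coeffs; split; [exact Hn | reflexivity].
  - intros [L [Hn ->]]; destruct (xi_sum_coeffs L) as [c [Hc Hs]].
    exists c; split; [lia | symmetry; exact Hs].
Qed.

Theorem proposition6p1 (n : nat) (z : C) :
  Q2 n z <->
  exists c : nat -> nat, (coeff_total c <= n)%nat /\ z = lattice_sum c.
Proof. rewrite Q2_iff_xi_sum, lattice_iff_xi_sum; reflexivity. Qed.
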